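(* Let $V\subset\mathbb{S}^3$ be a saturated open set and $\zeta$ a smooth unit vector field on $V$ whose integral curves are great circles. Define $f:V\to\mathbb{S}^2:=\{q\in\operatorname{Im}\mathbb{H}:|q|=1\}$ by $f(p)=\overline{p}\cdot\zeta(p)$ (quaternionic multiplication). Then $f$ is constant along the integral curves of $\zeta$, and $f$ is a harmonic map (with respect to the round metrics of $\mathbb{S}^3$ and $\mathbb{S}^2$) if and only if $\zeta$ is a harmonic unit vector field, i.e. $\Delta\zeta+|\nabla\zeta|^2\zeta=0$ on $V$.
   Context: $\mathbb{S}^3$ is the set of unit quaternions in $\mathbb{H}\cong\mathbb{R}^4$ with round metric and Levi-Civita connection $\nabla$; $\overline{p}$ is the quaternionic conjugate. An open set $V\subset\mathbb{S}^3$ carrying a unit vector field $\zeta$ whose integral curves are great circles is called saturated if for every $x\in V$ the whole great circle through $x$ tangent to $\zeta(x)$ lies in $V$. $\Delta\zeta=\operatorname{trace}\nabla^2\zeta$ is the rough Laplacian, where $\nabla^2_{v,w}\zeta=\nabla_v\nabla_w\zeta-\nabla_{\nabla_vw}\zeta$. A unit vector field is harmonic (a critical point of the energy $\tfrac12\int|\nabla\zeta|^2$ under variations through unit vector fields) iff $\Delta\zeta+|\nabla\zeta|^2\zeta=0$. A map is harmonic if its tension field (trace of its Hessian) vanishes. *)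

From Stdlib Require Import Reals Lra.
From Coquelicot Require Import Coquelicot.
Open Scope R_scope.

Record quat := mkQ { q0 : R; q1 : R; q2 : R; q3 : R }.

Definition qadd (a b : quat) : quat :=
  mkQ (q0 a + q0 b) (q1 a + q1 b) (q2 a + q2 b) (q3 a + q3 b).
Definition qscale (s : R) (a : quat) : quat :=
  mkQ (s * q0 a) (s * q1 a) (s * q2 a) (s * q3 a).
Definition qsub (a b : quat) : quat := qadd a (qscale (-1) b).
Definition qzero : quat := mkQ 0 0 0 0.
Definition qdot (a b : quat) : R :=
  q0 a * q0 b + q1 a * q1 b + q2 a * q2 b + q3 a * q3 b.
Definition qnorm (a : quat) : R := sqrt (qdot a a).

Definition qmul (a b : quat) : quat :=
  mkQ (q0 a * q0 b - q1 a * q1 b - q2 a * q2 b - q3 a * q3 b)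
      (q0 a * q1 b + q1 a * q0 b + q2 a * q3 b - q3 a * q2 b)
      (q0 a * q2 b - q1 a * q3 b + q2 a * q0 b + q3 a * q1 b)
      (q0 a * q3 b + q1 a * q2 b - q2 a * q1 b + q3 a * q0 b).
Definition qconj (a : quat) : quat := mkQ (q0 a) (- q1 a) (- q2 a) (- q3 a).

Definition qi : quat := mkQ 0 1 0 0.
Definition qj : quat := mkQ 0 0 1 0.
Definition qk : quat := mkQ 0 0 0 1.

Definition S3 (p : quat) : Prop := qdot p p = 1.

Definition ebasis (k : nat) : quat :=
  match k with 0 => mkQ 1 0 0 0 | 1 => qi | 2 => qj | _ => qk end.

Definition open4 (W : quat -> Prop) : Prop :=
  forall x, W x -> exists eps, 0 < eps /\
    forall y, qnorm (qsub y x) < eps -> W y.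

Definition open_in_S3 (V : quat -> Prop) : Prop :=
  (forall x, V x -> S3 x) /\
  forall x, V x -> exists eps, 0 < eps /\
    forall y, S3 y -> qnorm (qsub y x) < eps -> V y.

Fixpoint pder (ks : list nat) (g : quat -> R) : quat -> R :=
  match ks with
  | nil => g
  | cons k ks' => fun x => Derive (fun t => pder ks' g (qadd x (qscale t (ebasis k)))) 0
  end.

Definition cont_at (g : quat -> R) (x : quat) : Prop :=
  forall eps, 0 < eps -> exists delta, 0 < delta /\
    forall y, qnorm (qsub y x) < delta -> Rabs (g y - g x) < eps.

Definition smooth_on (W : quat -> Prop) (g : quat -> R) : Prop :=
  forall ks x, W x ->
    cont_at (pder ks g) x /\
    forall k, (k < 4)%nat ->
      ex_derive (fun t => pder ks g (qadd x (qscale t (ebasis k)))) 0.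

Definition smooth_map_on (V : quat -> Prop) (F : quat -> quat) : Prop :=
  exists (W : quat -> Prop) (G : quat -> quat),
    open4 W /\ (forall p, V p -> W p) /\
    smooth_on W (fun x => q0 (G x)) /\ smooth_on W (fun x => q1 (G x)) /\
    smooth_on W (fun x => q2 (G x)) /\ smooth_on W (fun x => q3 (G x)) /\
    (forall p, V p -> G p = F p).

Definition dQ (c : R -> quat) : quat :=
  mkQ (Derive (fun t => q0 (c t)) 0) (Derive (fun t => q1 (c t)) 0)
      (Derive (fun t => q2 (c t)) 0) (Derive (fun t => q3 (c t)) 0).

(** A curve in S^3 through p with velocity v (for v tangent at p). *)
Definition scurve (p v : quat) (t : R) : quat :=
  qscale (/ qnorm (qadd p (qscale t v))) (qadd p (qscale t v)).

Definition dmap (X : quat -> quat) (p v : quat) : quat :=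
  dQ (fun t => X (scurve p v t)).

(** Orthogonal projection onto the orthogonal complement of the unit vector n
    (= tangent space T_n S^3, resp. T_n S^2 inside Im H). *)
Definition proj (n w : quat) : quat := qsub w (qscale (qdot w n) n).

(** Levi-Civita connection of S^3: tangential part of the ambient derivative. *)
Definition nabla (X : quat -> quat) (p v : quat) : quat := proj p (dmap X p v).

(** Global orthonormal (left-invariant) frame E_1, E_2, E_3 of S^3:
    E_k(q) = q.i, q.j, q.k. *)
Definition frame (k : nat) (q : quat) : quat :=
  match k with 1 => qmul q qi | 2 => qmul q qj | _ => qmul q qk end.

Definition nabla2 (X : quat -> quat) (p : quat) (k : nat) : quat :=
  qsub (nabla (fun q => nabla X q (frame k q)) p (frame k p))
       (nabla X p (nabla (frame k) p (frame k p))).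

Definition rough_lap (X : quat -> quat) (p : quat) : quat :=
  qadd (nabla2 X p 1) (qadd (nabla2 X p 2) (nabla2 X p 3)).

Definition grad_sq (X : quat -> quat) (p : quat) : R :=
  qdot (nabla X p (frame 1 p)) (nabla X p (frame 1 p)) +
  qdot (nabla X p (frame 2 p)) (nabla X p (frame 2 p)) +
  qdot (nabla X p (frame 3 p)) (nabla X p (frame 3 p)).

Definition harmonic_uvf (zeta : quat -> quat) (V : quat -> Prop) : Prop :=
  forall p, V p -> qadd (rough_lap zeta p) (qscale (grad_sq zeta p) (zeta p)) = qzero.

(** Second fundamental form of f : S^3 -> S^2 (S^2 subset Im H) on E_k:
    (nabla df)(E_k,E_k) = nabla^f_{E_k}(df E_k) - df(nabla_{E_k} E_k),
    where the pull-back connection is the tangential (to S^2 at f p)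
    part of the ambient derivative. *)
Definition hess_map (f : quat -> quat) (p : quat) (k : nat) : quat :=
  qsub (proj (f p) (dmap (fun q => dmap f q (frame k q)) p (frame k p)))
       (dmap f p (nabla (frame k) p (frame k p))).

Definition tension (f : quat -> quat) (p : quat) : quat :=
  qadd (hess_map f p 1) (qadd (hess_map f p 2) (hess_map f p 3)).

Definition harmonic_map (f : quat -> quat) (V : quat -> Prop) : Prop :=
  forall p, V p -> tension f p = qzero.

Definition gcircle (x w : quat) (t : R) : quat :=
  qadd (qscale (cos t) x) (qscale (sin t) w).

Definition saturated (V : quat -> Prop) (zeta : quat -> quat) : Prop :=
  forall x, V x -> forall t, V (gcircle x (zeta x) t).

Definition unit_tangent_field (V : quat -> Prop) (zeta : quat -> quat) : Prop :=
  forall p, V p -> qdot (zeta p) p = 0 /\ qdot (zeta p) (zeta p) = 1.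

(** The integral curves of zeta are great circles: the integral curve through
    x is t |-> cos t x + sin t zeta(x), i.e. its velocity is zeta of it. *)
Definition geodesic_field (V : quat -> Prop) (zeta : quat -> quat) : Prop :=
  forall x, V x -> forall t,
    zeta (gcircle x (zeta x) t) = qadd (qscale (- sin t) x) (qscale (cos t) (zeta x)).

From Stdlib Require Import Reals Lra Psatz.
From Coquelicot Require Import Coquelicot.
Open Scope R_scope.

(* Extend zeta to a smooth map G on an open set of R^4 and work in the left-invariant
   frame E_e(p) = p e, e in {i, j, k}, whose integral curves are great circles. Along E_e
   every derivative of zeta and of f = conj(p) zeta is expressed through a = zeta(p),
   A_e = dG_p(E_e) and the second derivative B_e of G along E_e. Differentiating
   |zeta|^2 = 1 and <zeta, p> = 0 once and twice along these curves, together with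
   dG_p(zeta(p)) = -p (the integral curves of zeta are great circles), yields enough
   relations between a, A_e, B_e for the polynomial identity
   tau(f)(p) = conj(p) (Delta zeta + |nabla zeta|^2 zeta)(p); left translation by conj(p)
   reduces it to p = 1. Since left multiplication by conj(p) is injective, f is harmonic
   iff zeta is. Constancy of f along integral curves is the identity
   conj(cos t x + sin t z) (-sin t x + cos t z) = conj(x) z for orthonormal x, z. *)

Definition qone : quat := mkQ 1 0 0 0.

Ltac quat_ring :=
  intros;
  repeat match goal with q : quat |- _ => destruct q end;
  unfold proj, qsub, qadd, qscale, qmul, qconj, qdot, qone, qzero; cbn [q0 q1 q2 q3];
  (match goal with |- mkQ _ _ _ _ = mkQ _ _ _ _ => f_equal | _ => idtac end); ring.

(** * Partial derivatives and the chain rule *)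

Definition coord (j : nat) (y : quat) : R :=
  match j with 0 => q0 y | 1 => q1 y | 2 => q2 y | _ => q3 y end.

Definition set_coord (j : nat) (y : quat) (s : R) : quat :=
  match j with
  | 0 => mkQ s (q1 y) (q2 y) (q3 y)
  | 1 => mkQ (q0 y) s (q2 y) (q3 y)
  | 2 => mkQ (q0 y) (q1 y) s (q3 y)
  | _ => mkQ (q0 y) (q1 y) (q2 y) s
  end.

Definition l1norm (v : quat) : R := Rabs (q0 v) + Rabs (q1 v) + Rabs (q2 v) + Rabs (q3 v).

Definition box (r : R) (x y : quat) : Prop :=
  forall j, (j < 4)%nat -> Rabs (coord j y - coord j x) < r.

Lemma set_coord_shift j y s t : (j < 4)%nat ->
  qadd (set_coord j y s) (qscale t (ebasis j)) = set_coord j y (s + t).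
Proof.
  intros Hj; destruct j as [|[|[|[|j]]]]; try lia;
    unfold set_coord, qadd, qscale, ebasis, qi, qj, qk; simpl; f_equal; ring.
Qed.

Lemma set_coord_id j y : set_coord j y (coord j y) = y.
Proof. destruct y; destruct j as [|[|[|[|j]]]]; reflexivity. Qed.

Lemma box_set_coord r x y j s : (j < 4)%nat ->
  box r x y -> Rabs (s - coord j x) < r -> box r x (set_coord j y s).
Proof.
  intros Hj Hy Hs k Hk.
  destruct j as [|[|[|[|j]]]], k as [|[|[|[|k]]]]; try lia; first [exact Hs | exact (Hy _ Hk)].
Qed.

Lemma box_refl r x : 0 < r -> box r x x.
Proof. intros Hr j _; rewrite Rminus_diag, Rabs_R0; exact Hr. Qed.

Lemma qnorm_le_l1norm v : qnorm v <= l1norm v.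
Proof.
  unfold qnorm, qdot, l1norm.
  pose proof (Rabs_pos (q0 v)); pose proof (Rabs_pos (q1 v));
  pose proof (Rabs_pos (q2 v)); pose proof (Rabs_pos (q3 v)).
  apply Rsqr_incr_0_var; [|lra].
  rewrite Rsqr_sqrt by nra.
  assert (sq : forall z, z * z = Rabs z * Rabs z)
    by (intros z; rewrite <- Rabs_mult; symmetry; apply Rabs_pos_eq; nra).
  rewrite (sq (q0 v)), (sq (q1 v)), (sq (q2 v)), (sq (q3 v)); unfold Rsqr; nra.
Qed.

Definition partial (j : nat) (g : quat -> R) : quat -> R := pder (cons j nil) g.

Definition partials_exist_on (g : quat -> R) (W : quat -> Prop) : Prop :=
  forall z, W z -> forall j, (j < 4)%nat ->
    ex_derive (fun t => g (qadd z (qscale t (ebasis j)))) 0.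

Definition dirder (g : quat -> R) (x v : quat) : R :=
  partial 0 g x * q0 v + partial 1 g x * q1 v + partial 2 g x * q2 v + partial 3 g x * q3 v.

Definition grad_l1 (g : quat -> R) (x : quat) : R :=
  Rabs (partial 0 g x) + Rabs (partial 1 g x) + Rabs (partial 2 g x) + Rabs (partial 3 g x).

Lemma l1norm_ge0 v : 0 <= l1norm v.
Proof.
  unfold l1norm; pose proof (Rabs_pos (q0 v)); pose proof (Rabs_pos (q1 v));
    pose proof (Rabs_pos (q2 v)); pose proof (Rabs_pos (q3 v)); lra.
Qed.

Lemma grad_l1_ge0 g x : 0 <= grad_l1 g x.
Proof.
  unfold grad_l1; pose proof (Rabs_pos (partial 0 g x)); pose proof (Rabs_pos (partial 1 g x));
    pose proof (Rabs_pos (partial 2 g x)); pose proof (Rabs_pos (partial 3 g x)); lra.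
Qed.

Lemma l1norm_scale s v : l1norm (qscale s v) = Rabs s * l1norm v.
Proof. unfold l1norm, qscale; simpl; rewrite !Rabs_mult; ring. Qed.

Lemma l1norm_le_sub u w : l1norm u <= l1norm (qsub u w) + l1norm w.
Proof.
  unfold l1norm, qsub, qadd, qscale; simpl.
  assert (T : forall a b, Rabs a <= Rabs (a + -1 * b) + Rabs b).
  { intros a b; replace a with ((a + -1 * b) + b) at 1 by ring; apply Rabs_triang. }
  pose proof (T (q0 u) (q0 w)); pose proof (T (q1 u) (q1 w));
    pose proof (T (q2 u) (q2 w)); pose proof (T (q3 u) (q3 w)); lra.
Qed.

Lemma dirder_bound g x v : Rabs (dirder g x v) <= grad_l1 g x * l1norm v.
Proof.
  assert (T : forall a b, Rabs a <= grad_l1 g x -> Rabs (a * b) <= grad_l1 g x * Rabs b)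
    by (intros a b Ha; rewrite Rabs_mult; apply Rmult_le_compat_r; [apply Rabs_pos | exact Ha]).
  pose proof (Rabs_pos (partial 0 g x)); pose proof (Rabs_pos (partial 1 g x));
    pose proof (Rabs_pos (partial 2 g x)); pose proof (Rabs_pos (partial 3 g x)).
  unfold dirder, l1norm; rewrite !Rmult_plus_distr_l.
  repeat (eapply Rle_trans; [apply Rabs_triang|]; apply Rplus_le_compat);
    apply T; unfold grad_l1; lra.
Qed.

Lemma coord_qsub j y x : coord j (qsub y x) = coord j y - coord j x.
Proof. destruct j as [|[|[|[|j]]]]; unfold qsub, qadd, qscale; simpl; ring. Qed.

Lemma l1norm_coords v :
  l1norm v = Rabs (coord 0 v) + Rabs (coord 1 v) + Rabs (coord 2 v) + Rabs (coord 3 v).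
Proof. reflexivity. Qed.

Lemma box_of_l1norm r x y : l1norm (qsub y x) < r -> box r x y.
Proof.
  rewrite l1norm_coords, !coord_qsub; intros H j Hj.
  pose proof (Rabs_pos (coord 0 y - coord 0 x)); pose proof (Rabs_pos (coord 1 y - coord 1 x));
    pose proof (Rabs_pos (coord 2 y - coord 2 x)); pose proof (Rabs_pos (coord 3 y - coord 3 x)).
  destruct j as [|[|[|[|j]]]]; try lia; lra.
Qed.

Lemma l1norm_of_box r x y : box r x y -> l1norm (qsub y x) < 4 * r.
Proof.
  intros H; pose proof (H 0%nat ltac:(lia)); pose proof (H 1%nat ltac:(lia));
    pose proof (H 2%nat ltac:(lia)); pose proof (H 3%nat ltac:(lia)).
  rewrite l1norm_coords, !coord_qsub; lra.
Qed.

Lemma box_le r r' x z : r <= r' -> box r x z -> box r' x z.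
Proof. intros Hr H j Hj; specialize (H j Hj); lra. Qed.

Definition near_box (x : quat) (P : quat -> Prop) : Prop :=
  exists r, 0 < r /\ forall z, box r x z -> P z.

Lemma near_box_and x P Q : near_box x P -> near_box x Q -> near_box x (fun z => P z /\ Q z).
Proof.
  intros [r [Hr HP]] [s [Hs HQ]]; exists (Rmin r s); split; [now apply Rmin_glb_lt|].
  intros z Hz; split; [apply HP | apply HQ]; eapply box_le; eauto; [apply Rmin_l | apply Rmin_r].
Qed.

Lemma near_box_of_ball x (P : quat -> Prop) d :
  0 < d -> (forall z, qnorm (qsub z x) < d -> P z) -> near_box x P.
Proof.
  intros Hd HP; exists (d / 4); split; [lra|]; intros z Hz; apply HP.
  eapply Rle_lt_trans; [apply qnorm_le_l1norm|].
  pose proof (l1norm_of_box _ _ _ Hz); lra.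
Qed.

Lemma near_box_open W x : open4 W -> W x -> near_box x W.
Proof. intros HW Hx; destruct (HW x Hx) as [d [Hd H]]; exact (near_box_of_ball x W d Hd H). Qed.

Lemma near_box_cont g x eps : cont_at g x -> 0 < eps ->
  near_box x (fun z => Rabs (g z - g x) < eps).
Proof. intros Hg He; destruct (Hg eps He) as [d [Hd H]]; exact (near_box_of_ball x _ d Hd H). Qed.

Lemma is_derive_shift (F : R -> R) s l :
  is_derive (fun t => F (s + t)) 0 l -> is_derive F s l.
Proof.
  intros H.
  assert (H2 : is_derive (fun u => F (s + (u - s))) s (scal 1 l)).
  { apply (is_derive_comp (fun t => F (s + t)) (fun u => u - s)).
    - replace (s - s) with 0 by ring; exact H.
    - auto_derive; [easy | ring]. }
  rewrite (scal_one (K := R_AbsRing)) in H2.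
  eapply is_derive_ext; [|exact H2]; intros u; simpl; f_equal; ring.
Qed.

Lemma is_derive_partial g W j y s : (j < 4)%nat ->
  partials_exist_on g W -> W (set_coord j y s) ->
  is_derive (fun u => g (set_coord j y u)) s (partial j g (set_coord j y s)).
Proof.
  intros Hj Hex HW; apply is_derive_shift.
  eapply is_derive_ext; [|exact (Derive_correct _ _ (Hex _ HW j Hj))].
  intros t; simpl; rewrite set_coord_shift by exact Hj; reflexivity.
Qed.

Lemma mvt_coord g W x r j y s : (j < 4)%nat ->
  partials_exist_on g W -> (forall z, box r x z -> W z) ->
  box r x y -> Rabs (s - coord j x) < r ->
  exists xi, box r x xi /\ g (set_coord j y s) - g y = partial j g xi * (s - coord j y).
Proof.
  intros Hj Hex HW Hy Hs.
  pose proof (Hy j Hj) as Hyj.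
  assert (Hin : forall u, Rmin (coord j y) s <= u <= Rmax (coord j y) s ->
             box r x (set_coord j y u)).
  { intros u Hu; apply box_set_coord; auto.
    unfold Rmin, Rmax in Hu; apply Rabs_def2 in Hyj; apply Rabs_def2 in Hs.
    destruct (Rle_dec (coord j y) s); apply Rabs_def1; lra. }
  destruct (MVT_gen (fun u => g (set_coord j y u)) (coord j y) s
              (fun u => partial j g (set_coord j y u))) as [c [Hc E]].
  - intros u Hu; apply (is_derive_partial g W); auto; apply HW, Hin; lra.
  - intros u Hu; apply continuity_pt_filterlim, (ex_derive_continuous (fun u => g (set_coord j y u))).
    eexists; apply (is_derive_partial g W); auto; apply HW, Hin; lra.
  - exists (set_coord j y c); split; [apply Hin; exact Hc|].
    rewrite <- E, set_coord_id; reflexivity.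
Qed.

Lemma mvt_box g W x r y :
  partials_exist_on g W -> (forall z, box r x z -> W z) -> box r x y ->
  exists xi0 xi1 xi2 xi3,
    box r x xi0 /\ box r x xi1 /\ box r x xi2 /\ box r x xi3 /\
    g y - g x = partial 0 g xi0 * (q0 y - q0 x) + partial 1 g xi1 * (q1 y - q1 x)
              + partial 2 g xi2 * (q2 y - q2 x) + partial 3 g xi3 * (q3 y - q3 x).
Proof.
  intros Hex HW Hy.
  assert (Hr : 0 < r) by (pose proof (Hy 0%nat ltac:(lia)); pose proof (Rabs_pos (coord 0 y - coord 0 x)); lra).
  pose (y1 := set_coord 0 x (q0 y)); pose (y2 := set_coord 1 y1 (q1 y));
    pose (y3 := set_coord 2 y2 (q2 y)).
  assert (B1 : box r x y1) by (apply box_set_coord; [lia | apply box_refl, Hr | apply (Hy 0%nat); lia]).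
  assert (B2 : box r x y2) by (apply box_set_coord; [lia | exact B1 | apply (Hy 1%nat); lia]).
  assert (B3 : box r x y3) by (apply box_set_coord; [lia | exact B2 | apply (Hy 2%nat); lia]).
  destruct (mvt_coord g W x r 0 x (q0 y) ltac:(lia) Hex HW (box_refl r x Hr) (Hy 0%nat ltac:(lia)))
    as [xi0 [X0 E0]].
  destruct (mvt_coord g W x r 1 y1 (q1 y) ltac:(lia) Hex HW B1 (Hy 1%nat ltac:(lia))) as [xi1 [X1 E1]].
  destruct (mvt_coord g W x r 2 y2 (q2 y) ltac:(lia) Hex HW B2 (Hy 2%nat ltac:(lia))) as [xi2 [X2 E2]].
  destruct (mvt_coord g W x r 3 y3 (q3 y) ltac:(lia) Hex HW B3 (Hy 3%nat ltac:(lia))) as [xi3 [X3 E3]].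
  exists xi0, xi1, xi2, xi3; repeat split; auto.
  assert (Ey : set_coord 3 y3 (q3 y) = y) by (destruct y; reflexivity).
  rewrite Ey in E3; simpl coord in E0, E1, E2, E3.
  replace (g y - g x) with ((g y - g y3) + (g y3 - g y2) + (g y2 - g y1) + (g y1 - g x)) by ring.
  fold y1 y2 y3 in E0, E1, E2; rewrite E0, E1, E2, E3; ring.
Qed.

Lemma dirder_approx g W x : open4 W -> partials_exist_on g W -> W x ->
  (forall j, (j < 4)%nat -> cont_at (partial j g) x) ->
  forall eps, 0 < eps -> near_box x (fun y =>
    Rabs (g y - g x - dirder g x (qsub y x)) <= eps * l1norm (qsub y x)).
Proof.
  intros HWo Hex Hx Hc eps He.
  destruct (near_box_and _ _ _ (near_box_open W x HWo Hx)
             (near_box_and _ _ _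
               (near_box_and _ _ _ (near_box_cont _ x eps (Hc 0%nat ltac:(lia)) He)
                                   (near_box_cont _ x eps (Hc 1%nat ltac:(lia)) He))
               (near_box_and _ _ _ (near_box_cont _ x eps (Hc 2%nat ltac:(lia)) He)
                                   (near_box_cont _ x eps (Hc 3%nat ltac:(lia)) He))))
    as [r [Hr Hnear]].
  exists r; split; [exact Hr|]; intros y Hy.
  destruct (mvt_box g W x r y Hex (fun z Hz => proj1 (Hnear z Hz)) Hy)
    as [xi0 [xi1 [xi2 [xi3 [X0 [X1 [X2 [X3 E]]]]]]]].
  destruct (Hnear _ X0) as [_ [[C0 _] _]]; destruct (Hnear _ X1) as [_ [[_ C1] _]];
    destruct (Hnear _ X2) as [_ [_ [C2 _]]]; destruct (Hnear _ X3) as [_ [_ [_ C3]]].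
  assert (T : forall a b d, Rabs (a - b) < eps -> Rabs ((a - b) * d) <= eps * Rabs d)
    by (intros a b d Hab; rewrite Rabs_mult; apply Rmult_le_compat_r; [apply Rabs_pos | lra]).
  rewrite E; unfold dirder, l1norm, qsub, qadd, qscale; simpl.
  replace (q0 y + -1 * q0 x) with (q0 y - q0 x) by ring.
  replace (q1 y + -1 * q1 x) with (q1 y - q1 x) by ring.
  replace (q2 y + -1 * q2 x) with (q2 y - q2 x) by ring.
  replace (q3 y + -1 * q3 x) with (q3 y - q3 x) by ring.
  match goal with |- Rabs ?L <= _ =>
    replace L with ((partial 0 g xi0 - partial 0 g x) * (q0 y - q0 x)
                  + (partial 1 g xi1 - partial 1 g x) * (q1 y - q1 x)
                  + (partial 2 g xi2 - partial 2 g x) * (q2 y - q2 x)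
                  + (partial 3 g xi3 - partial 3 g x) * (q3 y - q3 x)) by ring end.
  rewrite !Rmult_plus_distr_l.
  repeat (eapply Rle_trans; [apply Rabs_triang|]; apply Rplus_le_compat); apply T; assumption.
Qed.

Lemma is_derive_plus_eq f g x df dg d : is_derive f x df -> is_derive g x dg ->
  df + dg = d -> is_derive (fun t => f t + g t) x d.
Proof. intros Hf Hg <-; exact (is_derive_plus f g x df dg Hf Hg). Qed.

Lemma is_derive_minus_eq f g x df dg d : is_derive f x df -> is_derive g x dg ->
  df - dg = d -> is_derive (fun t => f t - g t) x d.
Proof. intros Hf Hg <-; exact (is_derive_minus f g x df dg Hf Hg). Qed.

Lemma is_derive_mult_eq f g x df dg d : is_derive f x df -> is_derive g x dg ->
  df * g x + f x * dg = d -> is_derive (fun t => f t * g t) x d.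
Proof. intros Hf Hg <-; apply (is_derive_mult f g x df dg Hf Hg); intros; apply Rmult_comm. Qed.

Lemma is_derive_opp_eq f x df d : is_derive f x df -> - df = d ->
  is_derive (fun t => - f t) x d.
Proof. intros Hf <-; exact (is_derive_opp f x df Hf). Qed.

Lemma is_derive_const_eq (a x d : R) : 0 = d -> is_derive (fun _ => a) x d.
Proof. intros <-; apply (is_derive_const a x). Qed.

Lemma is_derive_id_eq (x d : R) : 1 = d -> is_derive (fun t => t) x d.
Proof. intros <-; apply (is_derive_id x). Qed.

(* Differentiates polynomial expressions in functions whose derivatives are hypotheses,
   leaving the identification of the derivative as a side goal. *)
Ltac derive_rules := match goal with
 | |- is_derive (fun t => t) _ _ => apply is_derive_id_eq; try reflexivity
 | |- is_derive (fun t => @?A t - @?B t) _ _ =>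
     eapply (is_derive_minus_eq A B); [derive_rules | derive_rules | try reflexivity]
 | |- is_derive (fun t => @?A t + @?B t) _ _ =>
     eapply (is_derive_plus_eq A B); [derive_rules | derive_rules | try reflexivity]
 | |- is_derive (fun t => @?A t * @?B t) _ _ =>
     eapply (is_derive_mult_eq A B); [derive_rules | derive_rules | try reflexivity]
 | |- is_derive (fun t => - @?A t) _ _ => eapply (is_derive_opp_eq A); [derive_rules | try reflexivity]
 | |- is_derive (fun t => ?c) _ _ => apply (is_derive_const_eq c); try reflexivity
 | |- _ => eassumption
 end.

Definition qderiv (c : R -> quat) (t0 : R) (L : quat) : Prop :=
  is_derive (fun t => q0 (c t)) t0 (q0 L) /\ is_derive (fun t => q1 (c t)) t0 (q1 L) /\
  is_derive (fun t => q2 (c t)) t0 (q2 L) /\ is_derive (fun t => q3 (c t)) t0 (q3 L).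

Lemma derive_quotient_near f x l e : is_derive f x l -> 0 < e ->
  locally 0 (fun h => h <> 0 -> Rabs ((f (x + h) - f x) / h - l) < e).
Proof.
  intros Hf He; apply is_derive_Reals in Hf; destruct (Hf e He) as [d Hd].
  exists d; intros h Hh Hh0; apply Hd; [exact Hh0|].
  change (Rabs (h - 0) < d) in Hh; rewrite Rminus_0_r in Hh; exact Hh.
Qed.

Lemma is_derive_of_quotient f x l :
  (forall e, 0 < e -> locally 0 (fun h => h <> 0 -> Rabs ((f (x + h) - f x) / h - l) < e)) ->
  is_derive f x l.
Proof.
  intros H; apply is_derive_Reals; intros e He; destruct (H e He) as [d Hd].
  exists d; intros h Hh0 Hh; apply Hd; [|exact Hh0].
  change (Rabs (h - 0) < d); rewrite Rminus_0_r; exact Hh.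
Qed.

Lemma qderiv_quotient c t0 L e : qderiv c t0 L -> 0 < e ->
  locally 0 (fun h => h <> 0 ->
    l1norm (qsub (qscale (/ h) (qsub (c (t0 + h)) (c t0))) L) < e).
Proof.
  intros [D0 [D1 [D2 D3]]] He.
  assert (He4 : 0 < e / 4) by lra.
  generalize (filter_and _ _
    (filter_and _ _ (derive_quotient_near _ _ _ _ D0 He4) (derive_quotient_near _ _ _ _ D1 He4))
    (filter_and _ _ (derive_quotient_near _ _ _ _ D2 He4) (derive_quotient_near _ _ _ _ D3 He4))).
  apply filter_imp; intros h [[A0 A1] [A2 A3]] Hh.
  specialize (A0 Hh); specialize (A1 Hh); specialize (A2 Hh); specialize (A3 Hh).
  unfold l1norm, qsub, qadd, qscale; simpl.
  replace (/ h * (q0 (c (t0 + h)) + -1 * q0 (c t0)) + -1 * q0 L)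
    with ((q0 (c (t0 + h)) - q0 (c t0)) / h - q0 L) by (field; exact Hh).
  replace (/ h * (q1 (c (t0 + h)) + -1 * q1 (c t0)) + -1 * q1 L)
    with ((q1 (c (t0 + h)) - q1 (c t0)) / h - q1 L) by (field; exact Hh).
  replace (/ h * (q2 (c (t0 + h)) + -1 * q2 (c t0)) + -1 * q2 L)
    with ((q2 (c (t0 + h)) - q2 (c t0)) / h - q2 L) by (field; exact Hh).
  replace (/ h * (q3 (c (t0 + h)) + -1 * q3 (c t0)) + -1 * q3 L)
    with ((q3 (c (t0 + h)) - q3 (c t0)) / h - q3 L) by (field; exact Hh).
  lra.
Qed.

Lemma l1norm_quotient h v : h <> 0 -> l1norm v = Rabs h * l1norm (qscale (/ h) v).
Proof.
  intros Hh; rewrite l1norm_scale, <- Rmult_assoc, <- Rabs_mult, Rinv_r, Rabs_R1 by exact Hh.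
  ring.
Qed.

Lemma dirder_quotient_bound g x L y h k e : h <> 0 -> 0 <= k ->
  Rabs (g y - g x - dirder g x (qsub y x)) <= k * l1norm (qsub y x) ->
  l1norm (qsub (qscale (/ h) (qsub y x)) L) <= e ->
  Rabs ((g y - g x) / h - dirder g x L) <= k * (l1norm L + e) + grad_l1 g x * e.
Proof.
  intros Hh Hk Happrox HQL.
  set (D := qsub y x) in *; set (Q := qscale (/ h) D) in *.
  assert (HQ : l1norm Q <= l1norm L + e) by (pose proof (l1norm_le_sub Q L); lra).
  replace ((g y - g x) / h - dirder g x L)
    with ((g y - g x - dirder g x D) / h + dirder g x (qsub Q L))
    by (unfold Q, D, dirder, qsub, qadd, qscale; simpl; field; exact Hh).
  eapply Rle_trans; [apply Rabs_triang|]; apply Rplus_le_compat.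
  - unfold Rdiv; rewrite Rabs_mult, Rabs_inv.
    apply (Rmult_le_reg_r (Rabs h)); [apply Rabs_pos_lt, Hh|].
    rewrite Rmult_assoc, Rinv_l, Rmult_1_r by (apply Rabs_no_R0, Hh).
    rewrite (l1norm_quotient h D Hh) in Happrox; fold Q in Happrox.
    eapply Rle_trans; [exact Happrox|]; rewrite Rmult_assoc; apply Rmult_le_compat_l; [exact Hk|].
    rewrite (Rmult_comm (l1norm L + e)); apply Rmult_le_compat_l; [apply Rabs_pos | exact HQ].
  - eapply Rle_trans; [apply dirder_bound|].
    apply Rmult_le_compat_l; [apply grad_l1_ge0 | exact HQL].
Qed.

Lemma is_derive_comp_curve g W c t0 L :
  open4 W -> partials_exist_on g W -> W (c t0) ->
  (forall j, (j < 4)%nat -> cont_at (partial j g) (c t0)) -> qderiv c t0 L ->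
  is_derive (fun t => g (c t)) t0 (dirder g (c t0) L).
Proof.
  intros HWo Hex Hx Hc HL; apply is_derive_of_quotient; intros eps He.
  set (x := c t0) in *.
  set (K := l1norm L + 1); set (M := grad_l1 g x + 1).
  assert (HK : 1 <= K) by (unfold K; pose proof (l1norm_ge0 L); lra).
  assert (HM : 1 <= M) by (unfold M; pose proof (grad_l1_ge0 g x); lra).
  set (k := eps / (2 * K)); set (e := Rmin 1 (eps / (2 * M))).
  assert (Hk : 0 < k) by (apply Rdiv_lt_0_compat; lra).
  assert (He0 : 0 < e) by (apply Rmin_glb_lt; [lra | apply Rdiv_lt_0_compat; lra]).
  assert (He1 : e <= 1) by apply Rmin_l.
  assert (HeM : e <= eps / (2 * M)) by apply Rmin_r.
  assert (Hsmall : k * (l1norm L + e) + grad_l1 g x * e < eps).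
  { assert (Hkk : k * (2 * K) = eps) by (unfold k; field; lra).
    assert (Hm : eps / (2 * M) * (2 * M) = eps) by (field; lra).
    assert (0 < eps / (2 * M)) by (apply Rdiv_lt_0_compat; lra).
    pose proof (grad_l1_ge0 g x); unfold K, M in *; nra. }
  destruct (dirder_approx g W x HWo Hex Hx Hc k Hk) as [r [Hr Happrox]].
  assert (Hball : locally 0 (fun h => Rabs h < r / K)).
  { exists (mkposreal _ (Rdiv_lt_0_compat r K Hr ltac:(lra))); intros h Hh.
    change (Rabs (h - 0) < r / K) in Hh; rewrite Rminus_0_r in Hh; exact Hh. }
  generalize (filter_and (F := locally 0) _ _ (qderiv_quotient c t0 L e HL He0) Hball).
  apply filter_imp; intros h [Hq Hh] Hh0; specialize (Hq Hh0); fold x in Hq.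
  assert (Hbox : box r x (c (t0 + h))).
  { apply box_of_l1norm; rewrite (l1norm_quotient h _ Hh0).
    pose proof (l1norm_le_sub (qscale (/ h) (qsub (c (t0 + h)) x)) L).
    apply (Rmult_lt_compat_r K) in Hh; [|lra].
    unfold Rdiv in Hh; rewrite Rmult_assoc, Rinv_l, Rmult_1_r in Hh by lra.
    pose proof (Rabs_pos h); unfold K in *; nra. }
  eapply Rle_lt_trans; [|exact Hsmall].
  apply (dirder_quotient_bound g x L _ h k e Hh0 (Rlt_le _ _ Hk) (Happrox _ Hbox)); lra.
Qed.

(** * Curves in H and on S^3 *)

Lemma dQ_eq c L : qderiv c 0 L -> dQ c = L.
Proof.
  intros [H0 [H1 [H2 H3]]]; unfold dQ; destruct L; simpl in *.
  f_equal; apply is_derive_unique; assumption.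
Qed.

Lemma qderiv_ext_loc c c' t0 L :
  locally t0 (fun t => c t = c' t) -> qderiv c t0 L -> qderiv c' t0 L.
Proof.
  intros Hl [H0 [H1 [H2 H3]]].
  split; [|split; [|split]]; (eapply is_derive_ext_loc; [|eassumption]);
    (eapply filter_imp; [|exact Hl]); intros t E; simpl; rewrite E; reflexivity.
Qed.

Lemma qderiv_ext c c' t0 L : (forall t, c t = c' t) -> qderiv c t0 L -> qderiv c' t0 L.
Proof. intros E; apply qderiv_ext_loc, filter_forall, E. Qed.

Lemma qderiv_eq c t0 L L' : qderiv c t0 L -> L = L' -> qderiv c t0 L'.
Proof. intros H <-; exact H. Qed.

Ltac qderiv_rules :=
  repeat match goal with H : qderiv _ _ _ |- _ => destruct H as [? [? [? ?]]] end;
  split; [|split; [|split]]; simpl; derive_rules; ring.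

Lemma qderiv_const a t0 : qderiv (fun _ => a) t0 qzero.
Proof. qderiv_rules. Qed.

Lemma qderiv_line q w : qderiv (fun t => qadd q (qscale t w)) 0 w.
Proof. qderiv_rules. Qed.

Lemma qderiv_add c1 c2 t0 L1 L2 : qderiv c1 t0 L1 -> qderiv c2 t0 L2 ->
  qderiv (fun t => qadd (c1 t) (c2 t)) t0 (qadd L1 L2).
Proof. intros; qderiv_rules. Qed.

Lemma qderiv_scale (s : R -> R) c t0 ds L : is_derive s t0 ds -> qderiv c t0 L ->
  qderiv (fun t => qscale (s t) (c t)) t0 (qadd (qscale ds (c t0)) (qscale (s t0) L)).
Proof. intros; qderiv_rules. Qed.

Lemma qderiv_mul c1 c2 t0 L1 L2 : qderiv c1 t0 L1 -> qderiv c2 t0 L2 ->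
  qderiv (fun t => qmul (c1 t) (c2 t)) t0 (qadd (qmul L1 (c2 t0)) (qmul (c1 t0) L2)).
Proof. intros; qderiv_rules. Qed.

Lemma qderiv_conj c t0 L : qderiv c t0 L -> qderiv (fun t => qconj (c t)) t0 (qconj L).
Proof. intros; qderiv_rules. Qed.

Lemma is_derive_qdot c1 c2 t0 L1 L2 : qderiv c1 t0 L1 -> qderiv c2 t0 L2 ->
  is_derive (fun t => qdot (c1 t) (c2 t)) t0 (qdot L1 (c2 t0) + qdot (c1 t0) L2).
Proof.
  intros; repeat match goal with H : qderiv _ _ _ |- _ => destruct H as [? [? [? ?]]] end.
  unfold qdot; derive_rules; ring.
Qed.

Lemma qderiv_proj c1 c2 t0 L1 L2 : qderiv c1 t0 L1 -> qderiv c2 t0 L2 ->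
  qderiv (fun t => proj (c1 t) (c2 t)) t0
    (qsub L2 (qadd (qscale (qdot L2 (c1 t0) + qdot (c2 t0) L1) (c1 t0))
                   (qscale (qdot (c2 t0) (c1 t0)) L1))).
Proof. intros; unfold proj, qdot; qderiv_rules. Qed.

Lemma is_derive_near f t0 d : is_derive f t0 d ->
  forall eps, 0 < eps -> locally t0 (fun t => Rabs (f t - f t0) < eps).
Proof.
  intros H eps He.
  assert (C : continuous f t0) by (apply ex_derive_continuous; eexists; exact H).
  exact (proj1 (filterlim_locally f (f t0)) C (mkposreal eps He)).
Qed.

Lemma qderiv_near c t0 L eps : qderiv c t0 L -> 0 < eps ->
  locally t0 (fun t => qnorm (qsub (c t) (c t0)) < eps).
Proof.
  intros [H0 [H1 [H2 H3]]] He.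
  assert (He4 : 0 < eps / 4) by lra.
  generalize (filter_and _ _
    (filter_and _ _ (is_derive_near _ _ _ H0 _ He4) (is_derive_near _ _ _ H1 _ He4))
    (filter_and _ _ (is_derive_near _ _ _ H2 _ He4) (is_derive_near _ _ _ H3 _ He4))).
  apply filter_imp; intros t [[A0 A1] [A2 A3]].
  eapply Rle_lt_trans; [apply qnorm_le_l1norm|].
  rewrite l1norm_coords, !coord_qsub; simpl; lra.
Qed.

Lemma is_derive_zero_of_locally_const (F : R -> R) a d :
  locally 0 (fun t => F t = a) -> is_derive F 0 d -> d = 0.
Proof.
  intros Hl Hd.
  assert (H0 : is_derive F 0 0).
  { eapply is_derive_ext_loc; [|apply (is_derive_const a 0)].
    eapply filter_imp; [|exact Hl]; intros t E; simpl; auto. }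
  rewrite <- (is_derive_unique _ _ _ Hd); exact (is_derive_unique _ _ _ H0).
Qed.

Lemma qadd_scale0 q w : qadd q (qscale 0 w) = q.
Proof. quat_ring. Qed.

Lemma scurve_0 q w : qdot q q = 1 -> scurve q w 0 = q.
Proof.
  intros Hq; unfold scurve, qnorm; rewrite qadd_scale0, Hq, sqrt_1, Rinv_1.
  quat_ring.
Qed.

Lemma qderiv_scurve q w : qdot q q = 1 -> qdot q w = 0 -> qderiv (scurve q w) 0 w.
Proof.
  intros Hq Hw.
  set (n := fun t => qdot (qadd q (qscale t w)) (qadd q (qscale t w))).
  assert (Hn0 : n 0 = 1) by (unfold n; rewrite qadd_scale0; exact Hq).
  assert (Dn : is_derive n 0 0).
  { pose proof (is_derive_qdot _ _ _ _ _ (qderiv_line q w) (qderiv_line q w)) as D.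
    cbv beta in D; rewrite qadd_scale0 in D.
    replace (qdot w q + qdot q w) with 0 in D by (unfold qdot in *; lra); exact D. }
  assert (Dinv : is_derive (fun t => / sqrt (n t)) 0 0).
  { pose proof (is_derive_sqrt n 0 0 Dn ltac:(lra)) as D.
    pose proof (is_derive_inv _ _ _ D) as Di; cbv beta in Di.
    rewrite Hn0, sqrt_1 in Di.
    replace (- (0 / (2 * 1)) / 1 ^ 2) with 0 in Di by field; apply Di, R1_neq_R0. }
  eapply qderiv_ext; [|eapply qderiv_eq; [exact (qderiv_scale _ _ _ _ _ Dinv (qderiv_line q w))|]].
  - reflexivity.
  - cbv beta; rewrite Hn0, sqrt_1, Rinv_1; quat_ring.
Qed.

Lemma scurve_S3 q w t :
  0 < qdot (qadd q (qscale t w)) (qadd q (qscale t w)) -> S3 (scurve q w t).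
Proof.
  intros Hp; unfold S3, scurve, qnorm.
  set (n := qdot (qadd q (qscale t w)) (qadd q (qscale t w))) in *.
  replace (qdot (qscale (/ sqrt n) (qadd q (qscale t w))) (qscale (/ sqrt n) (qadd q (qscale t w))))
    with (n / (sqrt n * sqrt n)) by (unfold n, qdot, qscale; simpl; field; apply Rgt_not_eq, sqrt_lt_R0, Hp).
  rewrite sqrt_sqrt by lra; field; lra.
Qed.

Lemma scurve_near_in V q w : open_in_S3 V -> V q -> qdot q w = 0 ->
  locally 0 (fun t => V (scurve q w t)).
Proof.
  intros [HS HO] Hq Hw; pose proof (HS q Hq) as Hq1; unfold S3 in Hq1.
  destruct (HO q Hq) as [eps [He Hball]].
  pose proof (is_derive_qdot _ _ _ _ _ (qderiv_line q w) (qderiv_line q w)) as Dn.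
  generalize (filter_and _ _ (qderiv_near _ _ _ _ (qderiv_scurve q w Hq1 Hw) He)
                              (is_derive_near _ _ _ Dn (1 / 2) ltac:(lra))).
  apply filter_imp; intros t [Ht Hn]; cbv beta in Hn.
  rewrite scurve_0 in Ht by exact Hq1; rewrite qadd_scale0, Hq1 in Hn.
  apply Hball; [apply scurve_S3; apply Rabs_def2 in Hn; lra | exact Ht].
Qed.

(** * Smooth maps into H *)

Lemma pder_app ks ls g x : pder ks (pder ls g) x = pder (app ks ls) g x.
Proof.
  revert x; induction ks as [|k ks IH]; intros x; simpl; [reflexivity|].
  apply Derive_ext; intros t; apply IH.
Qed.

Lemma smooth_on_partial W g j : smooth_on W g -> smooth_on W (partial j g).
Proof.
  intros Hs ks x Hx; unfold partial; destruct (Hs (app ks (cons j nil)) x Hx) as [C D]; split.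
  - intros eps He; destruct (C eps He) as [d [Hd Hb]]; exists d; split; [exact Hd|].
    intros y Hy; rewrite !(pder_app ks (cons j nil)); auto.
  - intros k Hk; eapply ex_derive_ext; [|apply (D k Hk)]; intros t; simpl.
    symmetry; apply (pder_app ks (cons j nil)).
Qed.

Lemma is_derive_smooth_comp g W c t0 L : open4 W -> smooth_on W g -> W (c t0) ->
  qderiv c t0 L -> is_derive (fun t => g (c t)) t0 (dirder g (c t0) L).
Proof.
  intros Ho Hs Hc HL; apply (is_derive_comp_curve g W); auto.
  - intros z Hz j Hj; exact (proj2 (Hs nil z Hz) j Hj).
  - intros j Hj; exact (proj1 (Hs (cons j nil) (c t0) Hc)).
Qed.

Definition dirder2 (g : quat -> R) (x u v : quat) : R :=
  dirder (partial 0 g) x u * q0 v + dirder (partial 1 g) x u * q1 v +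
  dirder (partial 2 g) x u * q2 v + dirder (partial 3 g) x u * q3 v.

Lemma is_derive_dirder g W c m t0 L M : open4 W -> smooth_on W g -> W (c t0) ->
  qderiv c t0 L -> qderiv m t0 M ->
  is_derive (fun t => dirder g (c t) (m t)) t0 (dirder2 g (c t0) L (m t0) + dirder g (c t0) M).
Proof.
  intros Ho Hs Hc HL [M0 [M1 [M2 M3]]].
  pose proof (is_derive_smooth_comp _ _ _ _ _ Ho (smooth_on_partial W g 0 Hs) Hc HL).
  pose proof (is_derive_smooth_comp _ _ _ _ _ Ho (smooth_on_partial W g 1 Hs) Hc HL).
  pose proof (is_derive_smooth_comp _ _ _ _ _ Ho (smooth_on_partial W g 2 Hs) Hc HL).
  pose proof (is_derive_smooth_comp _ _ _ _ _ Ho (smooth_on_partial W g 3 Hs) Hc HL).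
  unfold dirder at 1; derive_rules; unfold dirder2, dirder; ring.
Qed.

Definition smooth_quat_on (W : quat -> Prop) (G : quat -> quat) : Prop :=
  smooth_on W (fun x => q0 (G x)) /\ smooth_on W (fun x => q1 (G x)) /\
  smooth_on W (fun x => q2 (G x)) /\ smooth_on W (fun x => q3 (G x)).

Definition qdirder (G : quat -> quat) (x v : quat) : quat :=
  mkQ (dirder (fun y => q0 (G y)) x v) (dirder (fun y => q1 (G y)) x v)
      (dirder (fun y => q2 (G y)) x v) (dirder (fun y => q3 (G y)) x v).

Definition qdirder2 (G : quat -> quat) (x u v : quat) : quat :=
  mkQ (dirder2 (fun y => q0 (G y)) x u v) (dirder2 (fun y => q1 (G y)) x u v)
      (dirder2 (fun y => q2 (G y)) x u v) (dirder2 (fun y => q3 (G y)) x u v).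

Lemma qdirder_add G x u v : qdirder G x (qadd u v) = qadd (qdirder G x u) (qdirder G x v).
Proof. unfold qdirder, dirder, qadd; simpl; f_equal; ring. Qed.

Lemma qdirder_scale G x s u : qdirder G x (qscale s u) = qscale s (qdirder G x u).
Proof. unfold qdirder, dirder, qscale; simpl; f_equal; ring. Qed.

Lemma qdirder_frame_expansion G p a : qdot p p = 1 -> qdot a p = 0 ->
  qdirder G p a = qadd (qscale (qdot a (qmul p qi)) (qdirder G p (qmul p qi)))
                    (qadd (qscale (qdot a (qmul p qj)) (qdirder G p (qmul p qj)))
                          (qscale (qdot a (qmul p qk)) (qdirder G p (qmul p qk)))).
Proof.
  intros Hp Hap.
  transitivity (qdirder G p (qadd (qscale (qdot a (qmul p qi)) (qmul p qi))
                  (qadd (qscale (qdot a (qmul p qj)) (qmul p qj))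
                        (qadd (qscale (qdot a (qmul p qk)) (qmul p qk)) (qscale (qdot a p) p))))).
  - f_equal; transitivity (qscale (qdot p p) a); [rewrite Hp; quat_ring | unfold qi, qj, qk; quat_ring].
  - rewrite !qdirder_add, !qdirder_scale, Hap; quat_ring.
Qed.

Lemma qderiv_smooth_comp G W c t0 L : open4 W -> smooth_quat_on W G -> W (c t0) ->
  qderiv c t0 L -> qderiv (fun t => G (c t)) t0 (qdirder G (c t0) L).
Proof.
  intros Ho [S0 [S1 [S2 S3']]] Hc HL.
  split; [|split; [|split]];
    match goal with |- is_derive (fun t => ?f (G (c t))) _ _ =>
      apply (is_derive_smooth_comp (fun y => f (G y)) W) end; auto.
Qed.

Lemma qderiv_qdirder G W c m t0 L M : open4 W -> smooth_quat_on W G -> W (c t0) ->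
  qderiv c t0 L -> qderiv m t0 M ->
  qderiv (fun t => qdirder G (c t) (m t)) t0
    (qadd (qdirder2 G (c t0) L (m t0)) (qdirder G (c t0) M)).
Proof.
  intros Ho [S0 [S1 [S2 S3']]] Hc HL HM.
  split; [|split; [|split]]; simpl;
    match goal with |- is_derive (fun t => dirder (fun y => ?f (G y)) _ _) _ _ =>
      apply (is_derive_dirder (fun y => f (G y)) W) end; auto.
Qed.

Lemma qdot_mul_pure q e : q0 e = 0 -> qdot q (qmul q e) = 0.
Proof. destruct e as [e0 e1 e2 e3]; simpl; intros ->; quat_ring. Qed.

Lemma mul_pure_twice p e : q0 e = 0 -> qmul (qmul p e) e = qscale (- qdot e e) p.
Proof. destruct e as [e0 e1 e2 e3]; simpl; intros ->; quat_ring. Qed.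

Lemma proj_self_unit p s : qdot p p = 1 -> proj p (qscale s p) = qzero.
Proof.
  intros Hp; transitivity (qscale (s * (1 - qdot p p)) p); [quat_ring|].
  rewrite Hp; quat_ring.
Qed.

Lemma dmap_zero X p : qdot p p = 1 -> dmap X p qzero = qzero.
Proof.
  intros Hp; apply dQ_eq.
  eapply qderiv_ext; [|apply (qderiv_const (X p))]; intros t; simpl.
  unfold scurve, qnorm.
  replace (qadd p (qscale t qzero)) with p by quat_ring.
  rewrite Hp, sqrt_1, Rinv_1; f_equal; quat_ring.
Qed.

Lemma qderiv_frame_curve p e : qdot p p = 1 -> q0 e = 0 ->
  qderiv (fun t => qmul (scurve p (qmul p e) t) e) 0 (qmul (qmul p e) e).
Proof.
  intros Hp He; eapply qderiv_eq.
  - apply qderiv_mul; [apply qderiv_scurve, qdot_mul_pure; assumption | apply qderiv_const].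
  - quat_ring.
Qed.

(* Left-invariant vector fields on S^3 have great circles as integral curves. *)
Lemma nabla_frame_self p e : qdot p p = 1 -> q0 e = 0 -> qdot e e = 1 ->
  nabla (fun q => qmul q e) p (qmul p e) = qzero.
Proof.
  intros Hp He He1; unfold nabla, dmap.
  rewrite (dQ_eq _ _ (qderiv_frame_curve p e Hp He)), mul_pure_twice, He1 by exact He.
  apply proj_self_unit, Hp.
Qed.

Lemma qderiv_gcircle x y : qderiv (gcircle x y) 0 y.
Proof.
  split; [|split; [|split]]; unfold gcircle; simpl;
    auto_derive; auto; rewrite sin_0, cos_0; ring.
Qed.

(** * Left translation and the pointwise identity *)

Lemma qmul_assoc x y z : qmul (qmul x y) z = qmul x (qmul y z).
Proof. quat_ring. Qed.

Lemma qmul_qadd_r x y z : qmul x (qadd y z) = qadd (qmul x y) (qmul x z).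
Proof. quat_ring. Qed.

Lemma qmul_qscale_r x s y : qmul x (qscale s y) = qscale s (qmul x y).
Proof. quat_ring. Qed.

Lemma qmul_qsub_r x y z : qmul x (qsub y z) = qsub (qmul x y) (qmul x z).
Proof. quat_ring. Qed.

Lemma qmul_qone_r x : qmul x qone = x.
Proof. quat_ring. Qed.

Lemma qmul_qone_l x : qmul qone x = x.
Proof. quat_ring. Qed.

Lemma qconj_qone : qconj qone = qone.
Proof. quat_ring. Qed.

Lemma qdot_qone_r x : qdot x qone = q0 x.
Proof. quat_ring. Qed.


Lemma qmul_qzero_r x : qmul x qzero = qzero.
Proof. quat_ring. Qed.

Lemma qsub_qzero_r x : qsub x qzero = x.
Proof. quat_ring. Qed.

Lemma proj_qzero n : proj n qzero = qzero.
Proof. quat_ring. Qed.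

Lemma qdot_pure_units :
  q0 qi = 0 /\ q0 qj = 0 /\ q0 qk = 0 /\ qdot qi qi = 1 /\ qdot qj qj = 1 /\ qdot qk qk = 1.
Proof. unfold qdot, qi, qj, qk; simpl; repeat split; ring. Qed.

Lemma qmul_conj_rotation x z c s :
  qdot x x = 1 -> qdot z z = 1 -> qdot z x = 0 -> c * c + s * s = 1 ->
  qmul (qconj (qadd (qscale c x) (qscale s z))) (qadd (qscale (- s) x) (qscale c z))
  = qmul (qconj x) z.
Proof.
  intros Hx Hz Hzx Hcs.
  transitivity (qadd (qscale (c * c + s * s) (qmul (qconj x) z))
                     (qscale (c * s * (qdot z z - qdot x x) - 2 * s * s * qdot z x) qone));
    [quat_ring|].
  rewrite Hx, Hz, Hzx, Hcs; quat_ring.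
Qed.

Lemma qmul_conj_translate p x y : qdot p p = 1 ->
  qmul (qconj (qmul p x)) (qmul p y) = qmul (qconj x) y.
Proof.
  intros Hp.
  transitivity (qscale (qdot p p) (qmul (qconj x) y)); [quat_ring|].
  rewrite Hp; quat_ring.
Qed.

Lemma qmul_conj_cancel p y : qdot p p = 1 -> qmul (qconj p) (qmul p y) = y.
Proof.
  intros Hp; rewrite <- (qmul_qone_r p) at 1; rewrite qmul_conj_translate by exact Hp.
  quat_ring.
Qed.

Lemma qmul_cancel_conj p y : qdot p p = 1 -> qmul p (qmul (qconj p) y) = y.
Proof.
  intros Hp.
  transitivity (qscale (qdot p p) y); [quat_ring|].
  rewrite Hp; quat_ring.
Qed.

Lemma qmul_translate_inj p x y : qdot p p = 1 -> qmul p x = qmul p y -> x = y.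
Proof.
  intros Hp E; rewrite <- (qmul_conj_cancel p x Hp), E; exact (qmul_conj_cancel p y Hp).
Qed.

Lemma qdot_translate p x y : qdot p p = 1 -> qdot (qmul p x) (qmul p y) = qdot x y.
Proof.
  intros Hp.
  transitivity (qdot p p * qdot x y); [quat_ring|].
  rewrite Hp; ring.
Qed.

Lemma qdot_translate_one p x : qdot p p = 1 -> qdot (qmul p x) p = q0 x.
Proof.
  intros Hp; rewrite <- (qmul_qone_r p) at 2; rewrite qdot_translate by exact Hp.
  quat_ring.
Qed.

Lemma proj_translate p x : qdot p p = 1 -> proj p (qmul p x) = qmul p (proj qone x).
Proof.
  intros Hp.
  unfold proj; rewrite qdot_translate_one by exact Hp.
  transitivity (qmul p (qsub x (qscale (q0 x) qone))); [quat_ring | f_equal; quat_ring].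
Qed.

Lemma translate_surj p x : qdot p p = 1 -> exists y, x = qmul p y.
Proof. intros Hp; exists (qmul (qconj p) x); symmetry; apply qmul_cancel_conj, Hp. Qed.

(* With a = zeta(p), A = dG_p(p e) and B the second derivative of G along the frame curve
   of p e, these are the ambient second derivatives of f = conj(p) zeta and of zeta along
   p e (see [dmap_dmap_f] and [dmap_nabla_zeta] below). *)
Definition frame_hess_term (p e a A B : quat) : quat :=
  qadd (qadd (qmul (qconj (qmul (qmul p e) e)) a) (qmul (qconj (qmul p e)) A))
       (qadd (qmul (qconj (qmul p e)) A) (qmul (qconj p) B)).

Definition frame_lap_term (p e A B : quat) : quat :=
  qsub B (qadd (qscale (qdot B p + qdot A (qmul p e)) p) (qscale (qdot A p) (qmul p e))).

Lemma frame_hess_term_translate p e f u b : qdot p p = 1 ->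
  frame_hess_term p e (qmul p f) (qmul p u) (qmul p b) = frame_hess_term qone e f u b.
Proof.
  intros Hp; unfold frame_hess_term.
  rewrite !qmul_assoc, !(qmul_conj_translate p), (qmul_conj_cancel p) by exact Hp.
  rewrite !qmul_qone_l, qconj_qone, qmul_qone_l; reflexivity.
Qed.

Lemma frame_lap_term_translate p e u b : qdot p p = 1 ->
  frame_lap_term p e (qmul p u) (qmul p b) = qmul p (frame_lap_term qone e u b).
Proof.
  intros Hp; unfold frame_lap_term.
  rewrite !(qdot_translate_one p), (qdot_translate p) by exact Hp.
  rewrite !qmul_qone_l, !qdot_qone_r, qmul_qsub_r, qmul_qadd_r, !qmul_qscale_r, qmul_qone_r.
  reflexivity.
Qed.

Lemma qadd_mk a0 a1 a2 a3 b0 b1 b2 b3 :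
  qadd (mkQ a0 a1 a2 a3) (mkQ b0 b1 b2 b3) = mkQ (a0 + b0) (a1 + b1) (a2 + b2) (a3 + b3).
Proof. reflexivity. Qed.

Lemma qscale_mk s a0 a1 a2 a3 : qscale s (mkQ a0 a1 a2 a3) = mkQ (s * a0) (s * a1) (s * a2) (s * a3).
Proof. reflexivity. Qed.

Lemma qsub_mk a0 a1 a2 a3 b0 b1 b2 b3 :
  qsub (mkQ a0 a1 a2 a3) (mkQ b0 b1 b2 b3) = mkQ (a0 - b0) (a1 - b1) (a2 - b2) (a3 - b3).
Proof. unfold qsub, qadd, qscale; simpl; f_equal; ring. Qed.

Lemma qconj_mk a0 a1 a2 a3 : qconj (mkQ a0 a1 a2 a3) = mkQ a0 (- a1) (- a2) (- a3).
Proof. reflexivity. Qed.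

Lemma qmul_mk a0 a1 a2 a3 b0 b1 b2 b3 :
  qmul (mkQ a0 a1 a2 a3) (mkQ b0 b1 b2 b3) =
  mkQ (a0 * b0 - a1 * b1 - a2 * b2 - a3 * b3) (a0 * b1 + a1 * b0 + a2 * b3 - a3 * b2)
      (a0 * b2 - a1 * b3 + a2 * b0 + a3 * b1) (a0 * b3 + a1 * b2 - a2 * b1 + a3 * b0).
Proof. reflexivity. Qed.

Lemma qdot_mk a0 a1 a2 a3 b0 b1 b2 b3 :
  qdot (mkQ a0 a1 a2 a3) (mkQ b0 b1 b2 b3) = a0 * b0 + a1 * b1 + a2 * b2 + a3 * b3.
Proof. reflexivity. Qed.

Lemma q0_mk a0 a1 a2 a3 : q0 (mkQ a0 a1 a2 a3) = a0.
Proof. reflexivity. Qed.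

Lemma proj_unfold n w : proj n w = qsub w (qscale (qdot w n) n).
Proof. reflexivity. Qed.

(* Bottom-up evaluation of quaternion expressions in explicit coordinates; unlike [cbn]
   it never duplicates unevaluated subterms. *)
Ltac qnormalize :=
  repeat progress rewrite ?qadd_mk, ?qscale_mk, ?qsub_mk, ?qconj_mk, ?qmul_mk, ?qdot_mk, ?q0_mk.

Lemma frame_identity_at_one f u1 u2 u3 b1 b2 b3 :
  q0 f = 0 -> qdot f f = 1 ->
  qdot f u1 = 0 -> qdot f u2 = 0 -> qdot f u3 = 0 ->
  q0 u1 + qdot f qi = 0 -> q0 u2 + qdot f qj = 0 -> q0 u3 + qdot f qk = 0 ->
  qdot u1 u1 + qdot f b1 = 0 -> qdot u2 u2 + qdot f b2 = 0 -> qdot u3 u3 + qdot f b3 = 0 ->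
  q0 b1 + qdot u1 qi + (qdot u1 qi + qdot f (qmul qi qi)) = 0 ->
  q0 b2 + qdot u2 qj + (qdot u2 qj + qdot f (qmul qj qj)) = 0 ->
  q0 b3 + qdot u3 qk + (qdot u3 qk + qdot f (qmul qk qk)) = 0 ->
  qadd (qscale (qdot f qi) u1) (qadd (qscale (qdot f qj) u2) (qscale (qdot f qk) u3))
    = qscale (-1) qone ->
  qadd (proj f (frame_hess_term qone qi f u1 b1))
    (qadd (proj f (frame_hess_term qone qj f u2 b2)) (proj f (frame_hess_term qone qk f u3 b3)))
  = qadd (qadd (proj qone (frame_lap_term qone qi u1 b1))
            (qadd (proj qone (frame_lap_term qone qj u2 b2)) (proj qone (frame_lap_term qone qk u3 b3))))
         (qscale (qdot (proj qone u1) (proj qone u1) + qdot (proj qone u2) (proj qone u2)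
                  + qdot (proj qone u3) (proj qone u3)) f).
Proof.
  destruct f as [f0 f1 f2 f3], u1 as [a0 a1 a2 a3], u2 as [c0 c1 c2 c3], u3 as [d0 d1 d2 d3],
    b1 as [x0 x1 x2 x3], b2 as [y0 y1 y2 y3], b3 as [z0 z1 z2 z3].
  unfold frame_hess_term, frame_lap_term; rewrite !qmul_qone_l, qconj_qone, !qmul_qone_l.
  unfold qone, qi, qj, qk; rewrite !proj_unfold; qnormalize.
  intros Hf0 Hff Hv1 Hv2 Hv3 Ha0 Hc0 Hd0 Hb1 Hb2 Hb3 Hx0 Hy0 Hz0 Hs.
  injection Hs; intros Hs3 Hs2 Hs1 Hs0; subst f0.
  assert (Ea0 : a0 = - f1) by lra; assert (Ec0 : c0 = - f2) by lra; assert (Ed0 : d0 = - f3) by lra.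
  subst a0 c0 d0.
  assert (Ex0 : x0 = - 2 * a1) by lra; assert (Ey0 : y0 = - 2 * c2) by lra;
    assert (Ez0 : z0 = - 2 * d3) by lra.
  subst x0 y0 z0.
  (* [cf], [cv_e], [cs_m], [cb] are the constraints |f|^2 = 1, <f, u_e> = 0, the m-th
     component of sum_e f_e u_e = -1 and sum_e (|u_e|^2 + <f, b_e>) = 0; each imaginary
     component of the difference of the two sides is an explicit combination of them. *)
  set (cf := f1 * f1 + f2 * f2 + f3 * f3 - 1).
  set (cv1 := f1 * a1 + f2 * a2 + f3 * a3); set (cv2 := f1 * c1 + f2 * c2 + f3 * c3);
    set (cv3 := f1 * d1 + f2 * d2 + f3 * d3).
  set (cs1 := f1 * a1 + f2 * c1 + f3 * d1); set (cs2 := f1 * a2 + f2 * c2 + f3 * d2);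
    set (cs3 := f1 * a3 + f2 * c3 + f3 * d3).
  set (cb := f1 * f1 + a1 * a1 + a2 * a2 + a3 * a3 + (f1 * x1 + f2 * x2 + f3 * x3)
           + (f2 * f2 + c1 * c1 + c2 * c2 + c3 * c3 + (f1 * y1 + f2 * y2 + f3 * y3))
           + (f3 * f3 + d1 * d1 + d2 * d2 + d3 * d3 + (f1 * z1 + f2 * z2 + f3 * z3))).
  assert (Hcf : cf = 0) by (unfold cf; lra); assert (Hcb : cb = 0) by (unfold cb; lra).
  assert (Hcv1 : cv1 = 0) by (unfold cv1; lra); assert (Hcv2 : cv2 = 0) by (unfold cv2; lra);
    assert (Hcv3 : cv3 = 0) by (unfold cv3; lra).
  assert (Hcs1 : cs1 = 0) by (unfold cs1; lra); assert (Hcs2 : cs2 = 0) by (unfold cs2; lra);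
    assert (Hcs3 : cs3 = 0) by (unfold cs3; lra).
  f_equal.
  - ring.
  - match goal with |- ?L = ?R =>
      assert (E : L - R = f1 * (2 * cf - cb)
                          + 2 * (f2 * (cv3 - cs3) - f3 * (cv2 - cs2) + cf * (c3 - d2)))
        by (unfold cf, cb, cv2, cv3, cs2, cs3; ring) end.
    rewrite Hcf, Hcb, Hcv2, Hcv3, Hcs2, Hcs3 in E; lra.
  - match goal with |- ?L = ?R =>
      assert (E : L - R = f2 * (2 * cf - cb)
                          + 2 * (f3 * (cv1 - cs1) - f1 * (cv3 - cs3) + cf * (d1 - a3)))
        by (unfold cf, cb, cv1, cv3, cs1, cs3; ring) end.
    rewrite Hcf, Hcb, Hcv1, Hcv3, Hcs1, Hcs3 in E; lra.
  - match goal with |- ?L = ?R =>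
      assert (E : L - R = f3 * (2 * cf - cb)
                          + 2 * (f1 * (cv2 - cs2) - f2 * (cv1 - cs1) + cf * (a2 - c1)))
        by (unfold cf, cb, cv1, cv2, cs1, cs2; ring) end.
    rewrite Hcf, Hcb, Hcv1, Hcv2, Hcs1, Hcs2 in E; lra.
Qed.

Lemma frame_identity p a A1 A2 A3 B1 B2 B3 :
  qdot p p = 1 -> qdot a a = 1 -> qdot a p = 0 ->
  qdot a A1 = 0 -> qdot a A2 = 0 -> qdot a A3 = 0 ->
  qdot A1 p + qdot a (qmul p qi) = 0 -> qdot A2 p + qdot a (qmul p qj) = 0 ->
  qdot A3 p + qdot a (qmul p qk) = 0 ->
  qdot A1 A1 + qdot a B1 = 0 -> qdot A2 A2 + qdot a B2 = 0 -> qdot A3 A3 + qdot a B3 = 0 ->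
  qdot B1 p + qdot A1 (qmul p qi) + (qdot A1 (qmul p qi) + qdot a (qmul (qmul p qi) qi)) = 0 ->
  qdot B2 p + qdot A2 (qmul p qj) + (qdot A2 (qmul p qj) + qdot a (qmul (qmul p qj) qj)) = 0 ->
  qdot B3 p + qdot A3 (qmul p qk) + (qdot A3 (qmul p qk) + qdot a (qmul (qmul p qk) qk)) = 0 ->
  qadd (qscale (qdot a (qmul p qi)) A1)
    (qadd (qscale (qdot a (qmul p qj)) A2) (qscale (qdot a (qmul p qk)) A3)) = qscale (-1) p ->
  qadd (proj (qmul (qconj p) a) (frame_hess_term p qi a A1 B1))
    (qadd (proj (qmul (qconj p) a) (frame_hess_term p qj a A2 B2))
          (proj (qmul (qconj p) a) (frame_hess_term p qk a A3 B3)))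
  = qmul (qconj p)
      (qadd (qadd (proj p (frame_lap_term p qi A1 B1))
               (qadd (proj p (frame_lap_term p qj A2 B2)) (proj p (frame_lap_term p qk A3 B3))))
            (qscale (qdot (proj p A1) (proj p A1) + qdot (proj p A2) (proj p A2)
                     + qdot (proj p A3) (proj p A3)) a)).
Proof.
  intros Hp.
  destruct (translate_surj p a Hp) as [f ->], (translate_surj p A1 Hp) as [u1 ->],
    (translate_surj p A2 Hp) as [u2 ->], (translate_surj p A3 Hp) as [u3 ->],
    (translate_surj p B1 Hp) as [b1 ->], (translate_surj p B2 Hp) as [b2 ->],
    (translate_surj p B3 Hp) as [b3 ->].
  rewrite !qmul_assoc, !(qdot_translate p), !(qdot_translate_one p) by exact Hp.
  intros Hff Hf0 Hv1 Hv2 Hv3 Ha0 Hc0 Hd0 Hb1 Hb2 Hb3 Hx0 Hy0 Hz0 Hgeo.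
  rewrite <- !qmul_qscale_r, <- !qmul_qadd_r in Hgeo.
  assert (Hgeo1 : qadd (qscale (qdot f qi) u1) (qadd (qscale (qdot f qj) u2) (qscale (qdot f qk) u3))
                  = qscale (-1) qone)
    by (apply (qmul_translate_inj p _ _ Hp); rewrite Hgeo; quat_ring).
  rewrite (qmul_conj_cancel p), !(frame_hess_term_translate p), !(frame_lap_term_translate p),
    !(proj_translate p), !(qdot_translate p) by exact Hp.
  rewrite <- qmul_qscale_r, <- !qmul_qadd_r, (qmul_conj_cancel p) by exact Hp.
  apply frame_identity_at_one; assumption.
Qed.

(** * Frame derivatives of zeta *)

Section FrameDerivatives.
Variables (V : quat -> Prop) (zeta : quat -> quat) (W : quat -> Prop) (G : quat -> quat).
Hypotheses (HVo : open_in_S3 V) (HWo : open4 W) (HVW : forall p, V p -> W p)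
  (HGs : smooth_quat_on W G) (HGz : forall p, V p -> G p = zeta p)
  (Hut : unit_tangent_field V zeta).

Local Notation f := (fun p => qmul (qconj p) (zeta p)).

Lemma unit_of_V p : V p -> qdot p p = 1.
Proof. intros Hp; exact (proj1 HVo p Hp). Qed.

Lemma G_unit_tangent q : V q -> qdot (G q) (G q) = 1 /\ qdot (G q) q = 0.
Proof. intros Hq; rewrite HGz by exact Hq; destruct (Hut q Hq); auto. Qed.

Lemma qderiv_G_scurve q w : V q -> qdot q w = 0 ->
  qderiv (fun t => G (scurve q w t)) 0 (qdirder G q w).
Proof.
  intros Hq Hw; pose proof (unit_of_V q Hq) as Hq1.
  pose proof (qderiv_smooth_comp G W (scurve q w) 0 w HWo HGs) as K.
  rewrite scurve_0 in K by exact Hq1; apply K; [apply HVW, Hq | apply qderiv_scurve; assumption].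
Qed.

Lemma dmap_zeta q w : V q -> qdot q w = 0 -> dmap zeta q w = qdirder G q w.
Proof.
  intros Hq Hw; apply dQ_eq.
  eapply qderiv_ext_loc; [|apply qderiv_G_scurve; assumption].
  eapply filter_imp; [|apply (scurve_near_in V q w HVo Hq Hw)]; intros t Ht; simpl; auto.
Qed.

Lemma dmap_f q w : V q -> qdot q w = 0 ->
  dmap f q w = qadd (qmul (qconj w) (G q)) (qmul (qconj q) (qdirder G q w)).
Proof.
  intros Hq Hw; pose proof (unit_of_V q Hq) as Hq1; apply dQ_eq.
  pose proof (qderiv_mul _ _ _ _ _ (qderiv_conj _ _ _ (qderiv_scurve q w Hq1 Hw))
                (qderiv_G_scurve q w Hq Hw)) as K.
  cbv beta in K; rewrite scurve_0 in K by exact Hq1.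
  eapply qderiv_ext_loc; [|exact K].
  eapply filter_imp; [|apply (scurve_near_in V q w HVo Hq Hw)]; intros t Ht; simpl.
  rewrite HGz; auto.
Qed.

(* Derivatives of the constraints |G|^2 = 1 and <G, q> = 0 along tangent curves. *)
Lemma qdot_G_qdirder q w : V q -> qdot q w = 0 -> qdot (G q) (qdirder G q w) = 0.
Proof.
  intros Hq Hw; pose proof (unit_of_V q Hq) as Hq1.
  pose proof (is_derive_qdot _ _ _ _ _ (qderiv_G_scurve q w Hq Hw) (qderiv_G_scurve q w Hq Hw)) as D.
  cbv beta in D; rewrite scurve_0 in D by exact Hq1.
  assert (E := is_derive_zero_of_locally_const _ 1 _
    ltac:(eapply filter_imp; [|apply (scurve_near_in V q w HVo Hq Hw)];
          intros t Ht; apply (proj1 (G_unit_tangent _ Ht))) D).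
  unfold qdot in *; lra.
Qed.

Lemma qdot_qdirder_point q w : V q -> qdot q w = 0 ->
  qdot (qdirder G q w) q + qdot (G q) w = 0.
Proof.
  intros Hq Hw; pose proof (unit_of_V q Hq) as Hq1.
  pose proof (is_derive_qdot _ _ _ _ _ (qderiv_G_scurve q w Hq Hw) (qderiv_scurve q w Hq1 Hw)) as D.
  cbv beta in D; rewrite scurve_0 in D by exact Hq1.
  exact (is_derive_zero_of_locally_const _ 0 _
    ltac:(eapply filter_imp; [|apply (scurve_near_in V q w HVo Hq Hw)];
          intros t Ht; apply (proj2 (G_unit_tangent _ Ht))) D).
Qed.

Definition frame_deriv1 (p e : quat) : quat := qdirder G p (qmul p e).

Definition frame_deriv2 (p e : quat) : quat :=
  qadd (qdirder2 G p (qmul p e) (qmul p e)) (qdirder G p (qmul (qmul p e) e)).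

Lemma qderiv_frame_deriv1 p e : V p -> q0 e = 0 ->
  qderiv (fun t => frame_deriv1 (scurve p (qmul p e) t) e) 0 (frame_deriv2 p e).
Proof.
  intros Hp He; pose proof (unit_of_V p Hp) as Hp1.
  pose proof (qderiv_qdirder G W (scurve p (qmul p e)) (fun t => qmul (scurve p (qmul p e) t) e)
                0 (qmul p e) (qmul (qmul p e) e) HWo HGs) as K.
  cbv beta in K; rewrite scurve_0 in K by exact Hp1.
  apply K; [apply HVW, Hp | apply qderiv_scurve, qdot_mul_pure | apply qderiv_frame_curve]; assumption.
Qed.

Lemma scurve_frame_near_in p e : V p -> q0 e = 0 ->
  locally 0 (fun t => V (scurve p (qmul p e) t)).
Proof. intros Hp He; apply scurve_near_in, qdot_mul_pure; assumption. Qed.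

Lemma nabla_zeta_frame p e : V p -> q0 e = 0 -> nabla zeta p (qmul p e) = proj p (frame_deriv1 p e).
Proof. intros Hp He; unfold nabla; rewrite dmap_zeta; auto; apply qdot_mul_pure, He. Qed.

Lemma dmap_dmap_f p e : V p -> q0 e = 0 ->
  dmap (fun q => dmap f q (qmul q e)) p (qmul p e)
  = frame_hess_term p e (G p) (frame_deriv1 p e) (frame_deriv2 p e).
Proof.
  intros Hp He; pose proof (unit_of_V p Hp) as Hp1; apply dQ_eq.
  pose proof (qderiv_add _ _ _ _ _
    (qderiv_mul _ _ _ _ _ (qderiv_conj _ _ _ (qderiv_frame_curve p e Hp1 He))
       (qderiv_G_scurve p (qmul p e) Hp (qdot_mul_pure p e He)))
    (qderiv_mul _ _ _ _ _ (qderiv_conj _ _ _ (qderiv_scurve p (qmul p e) Hp1 (qdot_mul_pure p e He)))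
       (qderiv_frame_deriv1 p e Hp He))) as K.
  cbv beta in K; rewrite scurve_0 in K by exact Hp1.
  eapply qderiv_ext_loc; [|exact K].
  eapply filter_imp; [|apply (scurve_frame_near_in p e Hp He)]; intros t Ht; simpl.
  rewrite dmap_f; auto; apply qdot_mul_pure, He.
Qed.

Lemma dmap_nabla_zeta p e : V p -> q0 e = 0 ->
  dmap (fun q => nabla zeta q (qmul q e)) p (qmul p e)
  = frame_lap_term p e (frame_deriv1 p e) (frame_deriv2 p e).
Proof.
  intros Hp He; pose proof (unit_of_V p Hp) as Hp1; apply dQ_eq.
  pose proof (qderiv_proj _ _ _ _ _ (qderiv_scurve p (qmul p e) Hp1 (qdot_mul_pure p e He))
                (qderiv_frame_deriv1 p e Hp He)) as K.
  cbv beta in K; rewrite scurve_0 in K by exact Hp1.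
  eapply qderiv_ext_loc; [|exact K].
  eapply filter_imp; [|apply (scurve_frame_near_in p e Hp He)]; intros t Ht; simpl.
  symmetry; apply nabla_zeta_frame; assumption.
Qed.

(* Second derivatives of the constraints along the frame curve. *)
Lemma qdot_frame_deriv2_G p e : V p -> q0 e = 0 ->
  qdot (frame_deriv1 p e) (frame_deriv1 p e) + qdot (G p) (frame_deriv2 p e) = 0.
Proof.
  intros Hp He; pose proof (unit_of_V p Hp) as Hp1.
  pose proof (is_derive_qdot _ _ _ _ _ (qderiv_G_scurve p (qmul p e) Hp (qdot_mul_pure p e He))
                (qderiv_frame_deriv1 p e Hp He)) as D.
  cbv beta in D; rewrite scurve_0 in D by exact Hp1.
  eapply is_derive_zero_of_locally_const; [|exact D].
  eapply filter_imp; [|apply (scurve_frame_near_in p e Hp He)]; intros t Ht.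
  apply qdot_G_qdirder, qdot_mul_pure; assumption.
Qed.

Lemma qdot_frame_deriv2_point p e : V p -> q0 e = 0 ->
  qdot (frame_deriv2 p e) p + qdot (frame_deriv1 p e) (qmul p e)
  + (qdot (frame_deriv1 p e) (qmul p e) + qdot (G p) (qmul (qmul p e) e)) = 0.
Proof.
  intros Hp He; pose proof (unit_of_V p Hp) as Hp1.
  pose proof (is_derive_plus _ _ _ _ _
    (is_derive_qdot _ _ _ _ _ (qderiv_frame_deriv1 p e Hp He)
       (qderiv_scurve p (qmul p e) Hp1 (qdot_mul_pure p e He)))
    (is_derive_qdot _ _ _ _ _ (qderiv_G_scurve p (qmul p e) Hp (qdot_mul_pure p e He))
       (qderiv_frame_curve p e Hp1 He))) as D.
  cbv beta in D; rewrite !scurve_0 in D by exact Hp1.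
  eapply is_derive_zero_of_locally_const; [|exact D].
  eapply filter_imp; [|apply (scurve_frame_near_in p e Hp He)]; intros t Ht.
  apply qdot_qdirder_point, qdot_mul_pure; assumption.
Qed.

Lemma hess_map_frame p e : V p -> q0 e = 0 -> qdot e e = 1 ->
  qsub (proj (qmul (qconj p) (zeta p)) (dmap (fun q => dmap f q (qmul q e)) p (qmul p e)))
       (dmap f p (nabla (fun q => qmul q e) p (qmul p e)))
  = proj (qmul (qconj p) (zeta p)) (frame_hess_term p e (G p) (frame_deriv1 p e) (frame_deriv2 p e)).
Proof.
  intros Hp He He1; pose proof (unit_of_V p Hp) as Hp1.
  rewrite dmap_dmap_f, nabla_frame_self, dmap_zero, qsub_qzero_r by assumption; reflexivity.
Qed.

Lemma nabla2_frame p e : V p -> q0 e = 0 -> qdot e e = 1 ->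
  qsub (nabla (fun q => nabla zeta q (qmul q e)) p (qmul p e))
       (nabla zeta p (nabla (fun q => qmul q e) p (qmul p e)))
  = proj p (frame_lap_term p e (frame_deriv1 p e) (frame_deriv2 p e)).
Proof.
  intros Hp He He1; pose proof (unit_of_V p Hp) as Hp1.
  rewrite nabla_frame_self by assumption.
  change (qsub (proj p (dmap (fun q => nabla zeta q (qmul q e)) p (qmul p e)))
               (proj p (dmap zeta p qzero)) = proj p (frame_lap_term p e (frame_deriv1 p e) (frame_deriv2 p e))).
  rewrite dmap_nabla_zeta, dmap_zero, proj_qzero, qsub_qzero_r by assumption; reflexivity.
Qed.

Hypotheses (Hgeo : geodesic_field V zeta) (Hsat : saturated V zeta).

(* The integral curves are geodesics, so the ambient derivative of G along G is -p. *)
Lemma qdirder_G_G p : V p -> qdirder G p (G p) = qscale (-1) p.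
Proof.
  intros Hp.
  assert (E0 : gcircle p (zeta p) 0 = p)
    by (unfold gcircle; rewrite cos_0, sin_0; quat_ring).
  pose proof (qderiv_smooth_comp G W (gcircle p (zeta p)) 0 (zeta p) HWo HGs) as K.
  rewrite E0 in K; specialize (K (HVW p Hp) (qderiv_gcircle _ _)).
  assert (K2 : qderiv (fun t => qadd (qscale (- sin t) p) (qscale (cos t) (zeta p))) 0 (qscale (-1) p))
    by (split; [|split; [|split]]; simpl; auto_derive; auto; rewrite sin_0, cos_0; ring).
  rewrite HGz by exact Hp.
  rewrite <- (dQ_eq _ _ K), <- (dQ_eq _ _ K2); unfold dQ.
  f_equal; apply Derive_ext; intros t; rewrite HGz by (apply Hsat, Hp); rewrite Hgeo; auto.
Qed.

Lemma tension_eq p : V p ->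
  tension f p = qmul (qconj p) (qadd (rough_lap zeta p) (qscale (grad_sq zeta p) (zeta p))).
Proof.
  intros Hp; pose proof (unit_of_V p Hp) as Hp1.
  destruct qdot_pure_units as [Hi [Hj [Hk [Hi1 [Hj1 Hk1]]]]].
  unfold tension, hess_map, rough_lap, nabla2, grad_sq, frame; cbv beta iota.
  rewrite !hess_map_frame, !nabla2_frame, !nabla_zeta_frame by assumption.
  rewrite <- (HGz p Hp).
  destruct (G_unit_tangent p Hp) as [HGG HGp].
  apply frame_identity; try assumption;
    try (apply qdot_G_qdirder || apply qdot_qdirder_point || apply qdot_frame_deriv2_G
         || apply qdot_frame_deriv2_point); try assumption; try (apply qdot_mul_pure; assumption).
  unfold frame_deriv1; rewrite <- (qdirder_frame_expansion G p (G p) Hp1 HGp).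
  apply qdirder_G_G, Hp.
Qed.

End FrameDerivatives.

Theorem theoremB (V : quat -> Prop) (zeta : quat -> quat) :
  open_in_S3 V ->
  smooth_map_on V zeta ->
  unit_tangent_field V zeta ->
  geodesic_field V zeta ->
  saturated V zeta ->
  let f := fun p => qmul (qconj p) (zeta p) in
  (forall x, V x -> forall t, f (gcircle x (zeta x) t) = f x) /\
  (harmonic_map f V <-> harmonic_uvf zeta V).
Proof.
  intros HVo Hsm Hut Hgeo Hsat f; subst f.
  destruct Hsm as [W [G [HWo [HVW [S0 [S1 [S2 [S3 HGz]]]]]]]].
  assert (HGs : smooth_quat_on W G) by exact (conj S0 (conj S1 (conj S2 S3))).
  pose proof (tension_eq V zeta W G HVo HWo HVW HGs HGz Hut Hgeo Hsat) as Htension.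
  split; [|split]; [intros x Hx t | intros H p Hp; pose proof (unit_of_V V HVo p Hp) as Hp1 ..].
  - rewrite Hgeo by exact Hx; unfold gcircle; destruct (Hut x Hx) as [Hzx Hzz].
    apply qmul_conj_rotation; [exact (unit_of_V V HVo x Hx) | exact Hzz | exact Hzx |].
    pose proof (sin2_cos2 t) as E; unfold Rsqr in E; lra.
  - rewrite <- (qmul_cancel_conj p _ Hp1), <- (Htension p Hp), (H p Hp); apply qmul_qzero_r.
  - rewrite (Htension p Hp), (H p Hp); apply qmul_qzero_r.
Qed.
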